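(* Let $E$ be a crossed module extension of $\Pi_0$ with $\Pi_1$, $(s^1,s^0)$ a section system for $E$, and $M$ an abelian $\Pi_0$-module. (a) For every pointed $2$-cocycle $z\in Z^2_{\mathrm{pt}}(E,M)$ we have $z^{\mathrm{std}}_M(m)=z_M(m[m]^{-1})$ for $m\in M_E$, and for $g,h\in G_E$ \[z^{\mathrm{std}}_G(h,g)=z_M\big([h[\bar h]^{-1}]^{-1}\,{}^h([g[\bar g]^{-1}]^{-1})\,[hg[\overline{hg}]^{-1}]\big)-z_G\big(\mu([\bar h,\bar g]),[\bar h\bar g]\big)+z_G([\bar h],[\bar g]).\] (b) For every pointed $2$-coboundary $b\in B^2_{\mathrm{pt}}(E,M)$ we have $b^{\mathrm{std}}_M=0$, and if $c\in C^1_{\mathrm{pt}}(E,M)$ with $b=dc$, then $b^{\mathrm{std}}_G(h,g)=(dc_0)(\bar h,\bar g)$ for $g,h\in G_E$, where $c_0\in C^1(\Pi_0,M)$ is $c_0(p)=c([p])$.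
   Context: Let $\Pi_0$ be a group, $\Pi_1$ an abelian $\Pi_0$-module (written multiplicatively), $M$ an abelian $\Pi_0$-module (additive). A crossed module is $(G_V,M_V,\mu)$ with left action ${}^gm$ of $G_V$ on $M_V$, $\mu({}^gm)=g\mu(m)g^{-1}$, ${}^{\mu(n)}m=nmn^{-1}$. A crossed module extension $E$ of $\Pi_0$ with $\Pi_1$ is a crossed module $(G_E,M_E,\mu)$ with a monomorphism $\iota:\Pi_1\to M_E$ and epimorphism $\pi:G_E\to\Pi_0$ such that $\Pi_1\to M_E\to G_E\to\Pi_0$ is exact and ${}^g\iota(k)=\iota(\pi(g)\cdot k)$. Write $\bar g=\pi(g)$; $M$ is a $G_E$-module via $\pi$. A section system $(s^1,s^0)$: maps $s^0:\Pi_0\to G_E$ with $s^0(1)=1$, $\pi s^0=\mathrm{id}$, and $s^1:\mu(M_E)\to M_E$ with $s^1(1)=1$, $\mu s^1=\mathrm{id}$. Notation: $[p]:=s^0(p)$; $[x]:=s^1(x)$ for $x\in\mu(M_E)=\ker\pi$ (e.g. $[h[\bar h]^{-1}]=s^1(hs^0(\bar h)^{-1})$); $[m]:=s^1(\mu(m))$ for $m\in M_E$; $[q,p]:=s^1([q][p][qp]^{-1})$. Cochains of $E$: $C^1(E,M)=\mathrm{Map}(G_E,M)$, $C^2(E,M)=\mathrm{Map}(M_E\times G_E\times G_E,M)$, $(dc)(m,h,g)=c(\mu(m)h)-c(hg)+\bar h\cdot c(g)$, $(dc)(p,n,k,m,h,g)=c(p,\mu(n)k,\mu(m)h)-c(pn,k,hg)+c(n\,{}^km,kh,g)-\bar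 k\cdot c(m,h,g)$ on $C^2$; pointed means $c(1)=0$ resp. $c(1,1,1)=0$; $Z^2_{\mathrm{pt}}=Z^2\cap C^2_{\mathrm{pt}}$, $B^2_{\mathrm{pt}}=B^2\cap C^2_{\mathrm{pt}}$. Module and group parts: $c_M(m)=c(m,1,1)$, $c_G(h,g)=c(1,h,g)$; for $m\in M_E$ we write $c_G(m,h)$ for $c_G(\mu(m),h)$. Standardisation: for $z\in Z^2_{\mathrm{pt}}(E,M)$, $\sigma_z\in C^1_{\mathrm{pt}}(E,M)$ is $\sigma_z(g)=z([g[\bar g]^{-1}],[\bar g],1)$ and $z^{\mathrm{std}}:=z-d\sigma_z$. Group cochain differential: $(dc_0)(h,g)=c_0(h)-c_0(hg)+h\cdot c_0(g)$. *)

From HB Require Import structures.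
From mathcomp Require Import all_boot all_algebra.
Set Implicit Arguments. Unset Strict Implicit. Unset Printing Implicit Defensive.
Import GRing.Theory.
Local Open Scope ring_scope.

Record group := Group {
  gcar :> Type;
  gmul : gcar -> gcar -> gcar;
  gone : gcar;
  ginv : gcar -> gcar;
  gmulA : forall x y z, gmul x (gmul y z) = gmul (gmul x y) z;
  gmul1g : forall x, gmul gone x = x;
  gmulg1 : forall x, gmul x gone = x;
  gmulVg : forall x, gmul (ginv x) x = gone;
  gmulgV : forall x, gmul x (ginv x) = gone }.
Arguments gmul {g}. Arguments gone {g}. Arguments ginv {g}.
Infix "**" := gmul (at level 40, left associativity).

Definition is_hom (G H : group) (f : G -> H) := forall x y, f (x ** y) = f x ** f y.

Definition is_aut_action (G X : group) (act : G -> X -> X) :=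
  [/\ forall x, act gone x = x,
      forall g h x, act (g ** h) x = act g (act h x) &
      forall g x y, act g (x ** y) = act g x ** act g y].

Definition abelian_module (Pi0 Pi1 : group) (act : Pi0 -> Pi1 -> Pi1) :=
  (forall k l : Pi1, k ** l = l ** k) /\ is_aut_action act.

Definition additive_module (Pi0 : group) (M : zmodType) (act : Pi0 -> M -> M) :=
  [/\ forall m, act gone m = m,
      forall p q m, act (p ** q) m = act p (act q m) &
      forall p m n, act p (m + n) = act p m + act p n].

Record cm_ext (Pi0 Pi1 : group) (act1 : Pi0 -> Pi1 -> Pi1) := CMExt {
  GE : group;
  ME : group;
  cm_act : GE -> ME -> ME;
  cm_mu : ME -> GE;
  cm_iota : Pi1 -> ME;
  cm_pi : GE -> Pi0;
  cact_aut : is_aut_action cm_act;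
  mu_hom : is_hom cm_mu;
  mu_equiv : forall g m, cm_mu (cm_act g m) = g ** cm_mu m ** ginv g;
  peiffer : forall n m, cm_act (cm_mu n) m = n ** m ** ginv n;
  iota_hom : is_hom cm_iota;
  iota_inj : injective cm_iota;
  pi_hom : is_hom cm_pi;
  pi_surj : forall p, exists g, cm_pi g = p;
  exact_ME : forall m, cm_mu m = gone <-> exists k, cm_iota k = m;
  exact_GE : forall g, cm_pi g = gone <-> exists m, cm_mu m = g;
  cact_iota : forall g k, cm_act g (cm_iota k) = cm_iota (act1 (cm_pi g) k) }.
Arguments GE {Pi0 Pi1 act1} c. Arguments ME {Pi0 Pi1 act1} c.
Arguments cm_act {Pi0 Pi1 act1} c. Arguments cm_mu {Pi0 Pi1 act1} c.
Arguments cm_iota {Pi0 Pi1 act1} c. Arguments cm_pi {Pi0 Pi1 act1} c.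

(* section systems; s1 is only specified on cm_mu(M_E) = ker cm_pi, values outside
   are irrelevant (it is represented as a total function GE -> ME) *)
Record section_system (Pi0 Pi1 : group) (act1 : Pi0 -> Pi1 -> Pi1)
    (E : cm_ext act1) := SecSys {
  s0 : Pi0 -> GE E;
  s1 : GE E -> ME E;
  s0_1 : s0 gone = gone;
  s0_sec : forall p, cm_pi E (s0 p) = p;
  s1_1 : s1 gone = gone;
  s1_sec : forall x, (exists m, cm_mu E m = x) -> cm_mu E (s1 x) = x }.
Arguments s0 {Pi0 Pi1 act1 E} s. Arguments s1 {Pi0 Pi1 act1 E} s.

Section Cochains.
Variables (Pi0 Pi1 : group) (act1 : Pi0 -> Pi1 -> Pi1) (E : cm_ext act1)
  (M : zmodType) (actM : Pi0 -> M -> M).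

Notation G := (GE E). Notation Me := (ME E).
Notation bar := (cm_pi E).

Definition C1 := G -> M.
Definition C2 := Me -> G -> G -> M.

Definition d1 (c : C1) : C2 :=
  fun m h g => c (cm_mu E m ** h) - c (h ** g) + actM (bar h) (c g).

Definition d2 (c : C2) : Me -> Me -> G -> Me -> G -> G -> M :=
  fun p n k m h g =>
    c p (cm_mu E n ** k) (cm_mu E m ** h) - c (p ** n) k (h ** g)
    + c (n ** cm_act E k m) (k ** h) g - actM (bar k) (c m h g).

Definition pointed1 (c : C1) := c gone = 0.
Definition pointed2 (c : C2) := c gone gone gone = 0.

Definition is_cocycle2 (z : C2) :=
  forall p n k m h g, d2 z p n k m h g = 0.
Definition Z2pt (z : C2) := is_cocycle2 z /\ pointed2 z.
Definition is_coboundary2 (b : C2) :=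
  exists c : C1, forall m h g, b m h g = d1 c m h g.
Definition B2pt (b : C2) := is_coboundary2 b /\ pointed2 b.

Definition partM (c : C2) (m : Me) := c m gone gone.
Definition partG (c : C2) (h g : G) := c gone h g.

Variable S : section_system E.

Definition sigma_std (z : C2) : C1 :=
  fun g => z (s1 S (g ** ginv (s0 S (bar g)))) (s0 S (bar g)) gone.
Definition std (z : C2) : C2 :=
  fun m h g => z m h g - d1 (sigma_std z) m h g.

Definition sbrack (q p : Pi0) : Me :=
  s1 S (s0 S q ** s0 S p ** ginv (s0 S (q ** p))).

Definition d0 (c0 : Pi0 -> M) (h g : Pi0) : M :=
  c0 h - c0 (h ** g) + actM h (c0 g).

End Cochains.

Arguments C1 {Pi0 Pi1 act1} E M.
Arguments C2 {Pi0 Pi1 act1} E M.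
Arguments d1 {Pi0 Pi1 act1} E {M} actM c.
Arguments d2 {Pi0 Pi1 act1} E {M} actM c.
Arguments pointed1 {Pi0 Pi1 act1 E M} c.
Arguments pointed2 {Pi0 Pi1 act1 E M} c.
Arguments is_cocycle2 {Pi0 Pi1 act1} E {M} actM z.
Arguments Z2pt {Pi0 Pi1 act1} E {M} actM z.
Arguments is_coboundary2 {Pi0 Pi1 act1} E {M} actM b.
Arguments B2pt {Pi0 Pi1 act1} E {M} actM b.
Arguments partM {Pi0 Pi1 act1 E M} c m.
Arguments partG {Pi0 Pi1 act1 E M} c h g.
Arguments sigma_std {Pi0 Pi1 act1} E {M} S z.
Arguments std {Pi0 Pi1 act1} E {M} actM S z.
Arguments sbrack {Pi0 Pi1 act1 E} S q p.
Arguments d0 {Pi0 M} actM c0 h g.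

(* Every g in G_E factors as g = mu(a_g) [g-bar] with a_g = [g [g-bar]^-1], and
   sigma_z(g) = z(a_g, [g-bar], 1).  Evaluating dz = 0 at tuples that are mostly
   trivial shows that a pointed cocycle splits as z(p,k,g) = z(p,k,1) + z(1,k,g) and
   yields rewriting rules for both parts.  Expanding z(1,h,g) = z(1, mu(a_h)[h-bar],
   mu(a_g)[g-bar]) with them, and factoring a_hg = a_h ^[h-bar]a_g X by the Peiffer
   identity, the sigma-terms cancel and (a) remains.  For (b), sigma_(dc) = c - c s0 pi,
   so (dc)^std = d(c s0 pi), the inflation of dc_0. *)

From HB Require Import structures.
From mathcomp Require Import all_boot all_algebra.
Import GRing.Theory.
Local Open Scope ring_scope.
Set Implicit Arguments. Unset Strict Implicit.

Section GroupTheory.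
Variable G : group.
Implicit Types x y w : G.

Lemma gmulKg x y : ginv x ** (x ** y) = y.
Proof. by rewrite gmulA gmulVg gmul1g. Qed.

Lemma gmulKVg x y : x ** (ginv x ** y) = y.
Proof. by rewrite gmulA gmulgV gmul1g. Qed.

Lemma gmulgKV x y : x ** ginv y ** y = x.
Proof. by rewrite -gmulA gmulVg gmulg1. Qed.

Lemma gmulI x y w : x ** y = x ** w -> y = w.
Proof. by move=> e; rewrite -(gmulKg x y) e gmulKg. Qed.

Lemma ginv_unique x y : x ** y = gone -> ginv x = y.
Proof. by move=> e; apply: (@gmulI x); rewrite gmulgV e. Qed.

Lemma ginv1 : ginv (@gone G) = gone.
Proof. by apply: ginv_unique; rewrite gmul1g. Qed.

End GroupTheory.

Lemma hom1 (G H : group) (f : G -> H) : is_hom f -> f gone = gone.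
Proof. by move=> fM; apply: (@gmulI _ (f gone)); rewrite -fM !gmulg1. Qed.

Lemma homV (G H : group) (f : G -> H) : is_hom f -> forall x, f (ginv x) = ginv (f x).
Proof. by move=> fM x; symmetry; apply: ginv_unique; rewrite -fM gmulgV hom1. Qed.

Section AutAction.
Variables (G X : group) (act : G -> X -> X).
Hypothesis act_aut : is_aut_action act.

Lemma act_x1 g : act g gone = gone.
Proof.
by case: act_aut => _ _ actM; apply: (@gmulI _ (act g gone)); rewrite -actM !gmulg1.
Qed.

Lemma act_xV g x : act g (ginv x) = ginv (act g x).
Proof.
by case: act_aut => _ _ actM; symmetry; apply: ginv_unique; rewrite -actM gmulgV act_x1.
Qed.

End AutAction.

Section AdditiveModule.
Variables (Pi0 : group) (M : zmodType) (actM : Pi0 -> M -> M).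
Hypothesis modM : additive_module actM.

Lemma actM1 m : actM gone m = m.
Proof. by case: modM. Qed.

Lemma actMB p x y : actM p (x - y) = actM p x - actM p y.
Proof.
case: modM => _ _ actD.
by apply/eqP; rewrite -(subr_eq0 _ (actM p x - actM p y)) opprB addrA -actD subrK subrr.
Qed.

Lemma actM0 p : actM p 0 = 0.
Proof. by rewrite -[in LHS](subrr 0) actMB subrr. Qed.

End AdditiveModule.

Section CrossedModuleExtension.
Variables (Pi0 Pi1 : group) (act1 : Pi0 -> Pi1 -> Pi1) (E : cm_ext act1).

Local Notation bar := (cm_pi E).
Local Notation mu := (cm_mu E).

Lemma bar1 : bar gone = gone.
Proof. exact: hom1 (@pi_hom _ _ _ E). Qed.

Lemma mu1 : mu gone = gone.
Proof. exact: hom1 (@mu_hom _ _ _ E). Qed.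

Lemma barM g h : bar (g ** h) = bar g ** bar h.
Proof. exact: pi_hom. Qed.

Lemma barV g : bar (ginv g) = ginv (bar g).
Proof. exact: (homV (@pi_hom _ _ _ E)). Qed.

Lemma muM m n : mu (m ** n) = mu m ** mu n.
Proof. exact: mu_hom. Qed.

Lemma muV m : mu (ginv m) = ginv (mu m).
Proof. exact: (homV (@mu_hom _ _ _ E)). Qed.

Lemma cm_act1 g : cm_act E g gone = gone.
Proof. exact: (act_x1 (@cact_aut _ _ _ E)). Qed.

Lemma cm_actV g m : cm_act E g (ginv m) = ginv (cm_act E g m).
Proof. exact: (act_xV (@cact_aut _ _ _ E)). Qed.

Lemma bar_mu m : bar (mu m) = gone.
Proof. by apply/exact_GE; exists m. Qed.

Lemma cm_actM g h m : cm_act E (g ** h) m = cm_act E g (cm_act E h m).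
Proof. by case: (@cact_aut _ _ _ E). Qed.

(* Elements of ker mu come from Pi1, on which ker pi = im mu acts trivially. *)
Lemma cm_act_mu_ker (act1_1 : forall k, act1 gone k = k) n m :
  mu m = gone -> cm_act E (mu n) m = m.
Proof.
by case/exact_ME=> k <-; rewrite cact_iota bar_mu act1_1.
Qed.

Variable S : section_system E.

Local Notation corr g := (s1 S (g ** ginv (s0 S (bar g)))).

Lemma mu_s1 g : bar g = gone -> mu (s1 S g) = g.
Proof. by move=> gK; apply: s1_sec; apply/exact_GE. Qed.

Lemma mu_corr g : mu (corr g) = g ** ginv (s0 S (bar g)).
Proof. by apply: mu_s1; rewrite barM barV s0_sec gmulgV. Qed.

Lemma mu_corrK g : mu (corr g) ** s0 S (bar g) = g.
Proof. by rewrite mu_corr gmulgKV. Qed.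

Lemma mu_sbrack p q : mu (sbrack S p q) = s0 S p ** s0 S q ** ginv (s0 S (p ** q)).
Proof. by apply: mu_s1; rewrite !barM barV !s0_sec gmulgV. Qed.

End CrossedModuleExtension.

Section PointedCocycle.
Variables (Pi0 Pi1 : group) (act1 : Pi0 -> Pi1 -> Pi1) (E : cm_ext act1).
Variables (M : zmodType) (actM : Pi0 -> M -> M).
Hypothesis modM : additive_module actM.
Variable z : C2 E M.
Hypotheses (z_cocycle : is_cocycle2 E actM z) (z_pointed : pointed2 z).

Local Notation bar := (cm_pi E).
Local Notation mu := (cm_mu E).

Ltac simpl_cocycle :=
  rewrite /d2; do 2 rewrite ?mu1 ?gmul1g ?gmulg1 ?cm_act1 ?bar1
    ?(actM1 modM) ?z_pointed ?(actM0 modM).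

Lemma cocycle_1k1 k : z gone k gone = 0.
Proof.
have := z_cocycle gone gone k gone gone gone; simpl_cocycle.
by rewrite subrr add0r subr0.
Qed.

Lemma cocycle_p1g p g : z p gone g = z p gone gone.
Proof.
have := z_cocycle p gone gone gone gone g; simpl_cocycle.
by rewrite addrK => /eqP; rewrite subr_eq0 => /eqP ->.
Qed.

Lemma cocycle_11g g : z gone gone g = 0.
Proof. by rewrite cocycle_p1g. Qed.

Lemma cocycle_split p k g : z p k g = z p k gone + z gone k g.
Proof.
have := z_cocycle p gone k gone gone g; simpl_cocycle.
by rewrite cocycle_11g (actM0 modM) subr0 addrAC => /eqP; rewrite subr_eq0 => /eqP ->.
Qed.

Lemma cocycle_mulM p n k : z (p ** n) k gone = z p (mu n ** k) gone + z n k gone.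
Proof.
have := z_cocycle p n k gone gone gone; simpl_cocycle.
by rewrite subr0 addrAC => /eqP; rewrite subr_eq0 => /eqP ->.
Qed.

Lemma cocycle_module_group n k : z n k gone = z n gone gone - z gone (mu n) k.
Proof.
have := z_cocycle gone n gone gone k gone; simpl_cocycle.
rewrite cocycle_1k1 cocycle_p1g subr0 addrAC => /eqP; rewrite subr_eq0 => /eqP <-.
by rewrite addrAC subrr add0r.
Qed.

Lemma cocycle_mu_ker (act1_1 : forall k, act1 gone k = k) p n :
  mu p = gone -> z p (mu n) gone = z p gone gone.
Proof.
move=> p_ker; have := z_cocycle gone gone (mu n) p gone gone; simpl_cocycle.
rewrite p_ker (cm_act_mu_ker act1_1 _ p_ker) bar_mu (actM1 modM) subrr add0r.
by move=> /eqP; rewrite subr_eq0 => /eqP.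
Qed.

Lemma cocycle_group_part a s a' s' :
  z gone (mu a ** s) (mu a' ** s')
  = z a s s' - z (a ** cm_act E s a') (s ** s') gone + actM (bar s) (z a' s' gone).
Proof.
have := z_cocycle gone a s a' s' gone; simpl_cocycle.
by move=> /eqP; rewrite subr_eq0 => /eqP <-; rewrite addrACA addNr addr0 addrC subrK.
Qed.

End PointedCocycle.

Section Standardisation.
Variables (Pi0 Pi1 : group) (act1 : Pi0 -> Pi1 -> Pi1) (E : cm_ext act1).
Variables (M : zmodType) (actM : Pi0 -> M -> M).
Hypothesis modM : additive_module actM.
Variable S : section_system E.

Local Notation bar := (cm_pi E).
Local Notation mu := (cm_mu E).
Local Notation corr g := (s1 S (g ** ginv (s0 S (bar g)))).

Section Cocycle.
Hypothesis act1_1 : forall k, act1 gone k = k.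
Variable z : C2 E M.
Hypotheses (z_cocycle : is_cocycle2 E actM z) (z_pointed : pointed2 z).

Lemma std_partM m : partM (std E actM S z) m = partM z (m ** ginv (s1 S (mu m))).
Proof.
rewrite /partM /std /d1 /sigma_std !gmulg1 !gmul1g bar1 bar_mu s0_1 ginv1 gmulg1.
rewrite (actM1 modM) s1_1 subrK.
set n := s1 S (mu m).
have mu_n : mu n = mu m by apply: mu_s1; exact: bar_mu.
rewrite -{1}[m](gmulgKV m n) (cocycle_mulM modM z_cocycle z_pointed) gmulg1.
rewrite (cocycle_mu_ker modM z_cocycle act1_1) ?addrK //.
by rewrite muM muV mu_n gmulgV.
Qed.

Lemma std_partG h g :
  partG (std E actM S z) h g
  = partM z (ginv (corr h) ** cm_act E h (ginv (corr g)) ** corr (h ** g))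
    - partG z (mu (sbrack S (bar h) (bar g))) (s0 S (bar h ** bar g))
    + partG z (s0 S (bar h)) (s0 S (bar g)).
Proof.
rewrite /partG /partM /std /d1 /sigma_std mu1 gmul1g (barM h g).
set sh := s0 S (bar h); set sg := s0 S (bar g); set shg := s0 S (bar h ** bar g).
set ah := s1 S (h ** ginv sh); set ag := s1 S (g ** ginv sg).
set ahg := s1 S (h ** g ** ginv shg); set b := sbrack S (bar h) (bar g).
(* [X] is the argument of [z_M] in the statement. *)
set q := ah ** cm_act E sh ag; set X := ginv ah ** cm_act E h (ginv ag) ** ahg.
have h_corr : mu ah ** sh = h by exact: mu_corrK.
have g_corr : mu ag ** sg = g by exact: mu_corrK.
have ahg_qX : ahg = q ** X.
  rewrite /X -{1}h_corr cm_actM peiffer cm_actV /q.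
  by rewrite -!gmulA gmulKg !gmulKVg.
have mu_X : mu X = mu b.
  apply: (@gmulI _ (mu q)); rewrite -muM -ahg_qX.
  have -> : mu ahg = h ** g ** ginv shg.
    by apply: mu_s1; rewrite !barM barV s0_sec gmulgV.
  rewrite /q muM mu_equiv mu_sbrack mu_corr mu_corr.
  by rewrite -!gmulA !gmulKg.
have sbrack_shg : mu b ** shg = sh ** sg by rewrite mu_sbrack gmulgKV.
have z_hg : z gone h g = z ah sh gone + z gone sh sg - z q (sh ** sg) gone
                         + actM (bar h) (z ag sg gone).
  rewrite -{1}h_corr -g_corr (cocycle_group_part z_cocycle) s0_sec.
  by rewrite (cocycle_split modM z_cocycle z_pointed ah).
have z_ahg : z ahg shg gone = z q (sh ** sg) gone + (z X gone gone - z gone (mu b) shg).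
  rewrite ahg_qX (cocycle_mulM modM z_cocycle z_pointed) mu_X sbrack_shg.
  by rewrite (cocycle_module_group modM z_cocycle z_pointed X) mu_X.
rewrite z_hg z_ahg.
set A := z ah sh gone; set C := actM _ _.
by rewrite [A - _ + C]addrC addrKA opprB -[_ + _ - A]addrA subrKA addrCA [A + _]addrC addrK.
Qed.

End Cocycle.

Section Coboundary.
Implicit Types c : C1 E M.

Lemma d1_ext c c' :
  (forall x, c x = c' x) -> forall m h g, d1 E actM c m h g = d1 E actM c' m h g.
Proof. by move=> cc' m h g; rewrite /d1 !cc'. Qed.

Lemma d1D c c' m h g :
  d1 E actM (fun x => c x + c' x) m h g = d1 E actM c m h g + d1 E actM c' m h g.
Proof.
by case: modM => _ _ actD; rewrite /d1 actD opprD (addrACA (c _)) (addrACA (c _ - _)).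
Qed.

Lemma sigma_std_d1 c : pointed1 c ->
  forall x, sigma_std E S (d1 E actM c) x = c x - c (s0 S (bar x)).
Proof. by move=> c1 x; rewrite /sigma_std /d1 mu_corrK gmulg1 c1 (actM0 modM) addr0. Qed.

Lemma d1_inflation (c0 : Pi0 -> M) m h g :
  d1 E actM (fun x => c0 (bar x)) m h g = d0 actM c0 (bar h) (bar g).
Proof. by rewrite /d1 /d0 !barM bar_mu gmul1g. Qed.

Lemma std_d1 c : pointed1 c -> forall m h g,
  std E actM S (d1 E actM c) m h g = d0 actM (fun p => c (s0 S p)) (bar h) (bar g).
Proof.
move=> c1 m h g.
have c_split x : c x = sigma_std E S (d1 E actM c) x + c (s0 S (bar x)).
  by rewrite sigma_std_d1 // subrK.
rewrite /std (d1_ext c_split) d1D addrC addKr.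
exact: (d1_inflation (fun p => c (s0 S p))).
Qed.

Lemma d1_111 c : d1 E actM c gone gone gone = c gone.
Proof. by rewrite /d1 mu1 !gmul1g bar1 (actM1 modM) subrK. Qed.

Lemma std_coboundary (b : C2 E M) c :
  (forall m h g, b m h g = d1 E actM c m h g) -> pointed1 c ->
  forall m h g, std E actM S b m h g = d0 actM (fun p => c (s0 S p)) (bar h) (bar g).
Proof.
move=> bc c1 m h g; rewrite -(std_d1 c1 m h g).
have sigma_bc x : sigma_std E S b x = sigma_std E S (d1 E actM c) x by exact: bc.
by rewrite /std bc (d1_ext sigma_bc).
Qed.

End Coboundary.

End Standardisation.

Lemma d0_11 (Pi0 : group) (M : zmodType) (actM : Pi0 -> M -> M) (c0 : Pi0 -> M) :
  additive_module actM -> d0 actM c0 gone gone = c0 gone.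
Proof. by move=> modM; rewrite /d0 gmul1g (actM1 modM) subrK. Qed.

Unset Implicit Arguments.
Theorem proposition4p4
  (Pi0 Pi1 : group) (act1 : Pi0 -> Pi1 -> Pi1)
  (Hmod1 : abelian_module act1)
  (E : cm_ext act1) (S : section_system E)
  (M : zmodType) (actM : Pi0 -> M -> M) (HmodM : additive_module actM) :
  (* (a) *)
  (forall z : C2 E M, Z2pt E actM z ->
     (forall m : ME E,
        partM (std E actM S z) m
        = partM z (m ** ginv (s1 S (cm_mu E m)))) /\
     (forall h g : GE E,
        partG (std E actM S z) h g
        = partM z (ginv (s1 S (h ** ginv (s0 S (cm_pi E h))))
                   ** cm_act E h (ginv (s1 S (g ** ginv (s0 S (cm_pi E g)))))
                   ** s1 S (h ** g ** ginv (s0 S (cm_pi E (h ** g)))))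
          - partG z (cm_mu E (sbrack S (cm_pi E h) (cm_pi E g))) (s0 S (cm_pi E h ** cm_pi E g))
          + partG z (s0 S (cm_pi E h)) (s0 S (cm_pi E g)))) /\
  (* (b) *)
  (forall b : C2 E M, B2pt E actM b ->
     (forall m : ME E, partM (std E actM S b) m = 0) /\
     (forall c : C1 E M, pointed1 c ->
        (forall m h g, b m h g = d1 E actM c m h g) ->
        forall h g : GE E,
          partG (std E actM S b) h g
          = d0 actM (fun p => c (s0 S p)) (cm_pi E h) (cm_pi E g))).

Proof.
have act1_1 : forall k, act1 gone k = k by case: Hmod1 => _ [].
split.
- move=> z [z_cocycle z_pointed]; split.
  + exact: std_partM.
  + exact: std_partG.
- move=> b [[c bc] b_pointed].
  have c_pointed : pointed1 c by rewrite /pointed1 -(d1_111 HmodM c) -bc.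
  split=> [m | c' c'_pointed bc'].
  + by rewrite /partM (std_coboundary HmodM S bc c_pointed) !bar1 (d0_11 _ HmodM) s0_1.
  + exact: std_coboundary.
Qed.
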